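(* (1) Two elements of the hypoplactic monoid ${\mathsf{hypo}}$ lie in the same connected component of $K({\mathsf{hypo}})$ if and only if they have the same evaluation; i.e. $\sim^*$ coincides with $\equiv_{\mathrm{ev}}$ in ${\mathsf{hypo}}$. (2) For every $n\ge 1$, every connected component of $K({\mathsf{hypo}}_n)$ has diameter at most $n-1$, and some connected component of $K({\mathsf{hypo}}_n)$ has diameter exactly $n-1$. Hence the maximum diameter of a connected component of $K({\mathsf{hypo}}_n)$ is $n-1$.
   Context: Let $\mathcal{A}=\{1<2<3<\cdots\}$ be the ordered alphabet of positive integers and $\mathcal{A}_n=\{1<2<\cdots<n\}$. For a monoid $M$ and $s,t\in M$, write $s\sim t$ if there exist $x,y\in M$ with $s=xy$ and $t=yx$ (a cyclic shift); $\sim^*$ is the reflexive–transitive closure of $\sim$. The cyclic shift graph $K(M)$ is the undirected graph with vertex set $M$ and an edge between $s$ and $t$ iff $s\sim t$; its connected components are the $\sim^*$-classes, and distances/diameters are graph distances in $K(M)$. The evaluation of a word $w$ is the tuple $(|w|_a)_{a}$ giving the number of occurrences of each letter $a$; all monoids considered are defined by presentations whose defining relations preserve evaluation, so the evaluation of an element is well defined, and $s\equiv_{\mathrm{ev}} t$ means $s$ and $t$ have the same evaluation. The hypoplactic monoid ${\mathsf{hypo}}$ is $\mathcal{A}^*$ modulo the congruence generated by the relations $acb=cab$ ($a\le b<c$), $bac=bca$ ($a<b\le c$), $cadb=acbd$ ($a\le b<c\le d$), and $bdac=dbca$ ($a<b\le c<d$), where $a,b,c,d$ range over letters. ${\mathsf{hypo}}_n$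 is the monoid defined by the same relations restricted to letters of $\mathcal{A}_n$, i.e. a quotient of $\mathcal{A}_n^*$. *)

From Stdlib Require Import Relations.
From mathcomp Require Import all_boot.
Set Implicit Arguments. Unset Strict Implicit. Unset Printing Implicit Defensive.

Definition hypo_rel (l r : seq nat) : Prop :=
  (exists a b c, [/\ a <= b, b < c, l = [:: a; c; b] & r = [:: c; a; b]]) \/
  (exists a b c, [/\ a < b, b <= c, l = [:: b; a; c] & r = [:: b; c; a]]) \/
  (exists a b c d, [/\ a <= b, b < c, c <= d, l = [:: c; a; d; b] & r = [:: a; c; b; d]]) \/
  (exists a b c d, [/\ a < b, b <= c, c < d, l = [:: b; d; a; c] & r = [:: d; b; c; a]]).

Definition hypo_step (u v : seq nat) : Prop :=
  exists p q l r, [/\ hypo_rel l r, u = p ++ l ++ q & v = p ++ r ++ q].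

Definition hypo_cong : relation (seq nat) := clos_refl_sym_trans (seq nat) hypo_step.

Definition alphA : pred nat := fun a => 0 < a.
Definition alphAn (n : nat) : pred nat := fun a => 0 < a <= n.

(* Cyclic shift in the monoid A^*/hypo_cong: s ~ t iff s = xy, t = yx for some
   elements x y of the monoid (represented by words over the alphabet). *)
Definition cshift (A : pred nat) (s t : seq nat) : Prop :=
  exists x y, [/\ all A x, all A y, hypo_cong s (x ++ y) & hypo_cong t (y ++ x)].

(* walk A k s t : there is a walk of length k in K(M) from [s] to [t]
   (length 0 means [s] = [t] as monoid elements). *)
Fixpoint walk (A : pred nat) (k : nat) (s t : seq nat) : Prop :=
  match k with
  | 0 => hypo_cong s t
  | k'.+1 => exists w, all A w /\ cshift A s w /\ walk A k' w t
  end.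

Definition connected (A : pred nat) (s t : seq nat) : Prop := exists k, walk A k s t.

Definition dist_eq (A : pred nat) (s t : seq nat) (k : nat) : Prop :=
  walk A k s t /\ forall j, j < k -> ~ walk A j s t.

Definition dist_le (A : pred nat) (s t : seq nat) (k : nat) : Prop :=
  exists j, j <= k /\ walk A j s t.

Definition ev_eq (s t : seq nat) : Prop := forall a, count_mem a s = count_mem a t.

(* Two words are hypoplactically congruent iff they have the same evaluation and,
   for every pair of letters x < y adjacent in value, agree on whether some y
   occurs before some x (Novelli): the defining relations preserve these data,
   and conversely every word is congruent to a normal form of nondecreasing runs,
   each lying above the next, which the data determine.
   Cutting a word into its letters <= a and its letters > a gives two words that
   are cyclic shifts of each other and differ exactly in the inversion at the
   adjacent pair (a, y).  Correcting these inversions one at a time, from the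
   largest a down, joins two words over {1, ..., n} with the same evaluation by
   at most n - 1 cyclic shifts.  On rearrangements of 1 ... n a cyclic shift
   xy -> yx creates at most one inversion "a+1 before a", so 1 2 ... n and
   n ... 2 1 are at distance exactly n - 1. *)

From Stdlib Require Import Relations.
From mathcomp Require Import all_boot zify.
Set Implicit Arguments. Unset Strict Implicit. Unset Printing Implicit Defensive.

Local Notation "u ≡ v" := (hypo_cong u v) (at level 70, no associativity).
Local Notation nondecr := (pairwise leq).

(** * Rewriting with the defining relations *)

Lemma cong_refl u : u ≡ u. Proof. exact: rst_refl. Qed.
Lemma cong_sym u v : u ≡ v -> v ≡ u. Proof. exact: rst_sym. Qed.
Lemma cong_trans v u w : u ≡ v -> v ≡ w -> u ≡ w. Proof. exact: rst_trans. Qed.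

Lemma cong_cat p q u v : u ≡ v -> p ++ u ++ q ≡ p ++ v ++ q.
Proof.
elim=> {u v} [u v [p' [q' [l [r [lr -> ->]]]]] | u | u v _ IH | u v w _ IH1 _ IH2].
- by apply: rst_step; exists (p ++ p'), (q' ++ q), l, r; split; rewrite -?catA.
- exact: cong_refl.
- exact: cong_sym.
- exact: cong_trans IH2.
Qed.

Lemma cong_in p q u v s t : u ≡ v -> s = p ++ u ++ q -> t = p ++ v ++ q -> s ≡ t.
Proof. by move=> uv -> ->; apply: cong_cat. Qed.
Arguments cong_in p q {u v s t}.

Ltac seq_norm := do 3 (rewrite /= -?cats1 ?cats0 -?catA); try reflexivity.

Lemma rel_cong l r : hypo_rel l r -> l ≡ r.
Proof. by move=> lr; apply: rst_step; exists [::], [::], l, r; split; rewrite ?cats0. Qed.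

Lemma cong_acb a b c : a <= b -> b < c -> [:: a; c; b] ≡ [:: c; a; b].
Proof. by move=> ab bc; apply: rel_cong; left; exists a, b, c. Qed.

Lemma cong_bac a b c : a < b -> b <= c -> [:: b; a; c] ≡ [:: b; c; a].
Proof. by move=> ab bc; apply: rel_cong; right; left; exists a, b, c. Qed.

Lemma cong_cadb a b c d : a <= b -> b < c -> c <= d -> [:: c; a; d; b] ≡ [:: a; c; b; d].
Proof. by move=> ab bc cd; apply: rel_cong; right; right; left; exists a, b, c, d. Qed.

Lemma cong_bdac a b c d : a < b -> b <= c -> c < d -> [:: b; d; a; c] ≡ [:: d; b; c; a].
Proof. by move=> ab bc cd; apply: rel_cong; right; right; right; exists a, b, c, d. Qed.

Lemma nondecr_rcons s z : nondecr s -> all (leq^~ z) s -> nondecr (rcons s z).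
Proof. by move=> ss sz; rewrite pairwise_rcons ss sz. Qed.

Lemma nondecr_head_last s x : nondecr (rcons s x) -> head x s <= x.
Proof. by case: s => [|h s] //= /andP[/allP hs _]; apply: hs; rewrite mem_rcons mem_head. Qed.

Lemma rcons_neq0 (s : seq nat) x : rcons s x != [::]. Proof. by case: s. Qed.

Lemma all_ltn_trans s x y : all (fun c => c < x) s -> x <= y -> all (fun c => c < y) s.
Proof. by move=> sx xy; apply/allP => c /(allP sx); lia. Qed.

Lemma slide_right c B w : nondecr (rcons B w) -> all (fun x => x < c) (rcons B w) ->
  c :: rcons B w ≡ B ++ [:: c; w].
Proof.
elim: B => [|b B IH] /=; first by move=> *; exact: cong_refl.
move=> /andP[bB Bw] /andP[bc Bc].
have [n [rest Bn]] : exists n rest, rcons B w = n :: rest.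
  by case: (B) => [|x s]; [exists w, [::] | exists x, (rcons s w)].
apply: (@cong_trans [:: b, c & rcons B w]); last first.
  by apply: (cong_in [:: b] [::] (IH Bw Bc)); rewrite ?cats0.
apply: cong_sym; apply: (cong_in [::] rest (@cong_acb b n c _ _)); rewrite ?Bn //.
- by move: bB; rewrite Bn /= => /andP[].
- by move: Bc; rewrite Bn /= => /andP[].
Qed.

Lemma slide_left x Q z : nondecr (x :: Q) -> z < x -> x :: Q ++ [:: z] ≡ [:: x, z & Q].
Proof.
elim: Q x => [|q Q IH] x /=; first by move=> *; exact: cong_refl.
move=> /andP[/andP[xq _] qQ] zx.
apply: (@cong_trans [:: x, q, z & Q]).
  by apply: (cong_in [:: x] [::] (IH q qQ (leq_trans zx xq))); seq_norm.
by apply: cong_sym; apply: (cong_in [::] Q (cong_bac zx xq)).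
Qed.

Lemma jump_left_rcons p z B b : nondecr (rcons B b) -> all (fun x => x < p) (rcons B b) ->
  p <= z -> B ++ [:: p; b; z] ≡ [:: p, z & rcons B b].
Proof.
elim/last_ind: B b => [|B s IH] b.
  by move=> _; rewrite /= andbT => bp pz; exact: cong_bac.
rewrite pairwise_rcons !all_rcons => /andP[/andP[sb _] Bs] /and3P[bp sp Bp] pz.
apply: (@cong_trans (B ++ [:: p; s; z; b])).
  by apply: cong_sym; apply: (cong_in B [::] (cong_cadb sb bp pz)); seq_norm.
have := IH s Bs; rewrite all_rcons sp Bp => /(_ isT pz) H.
by apply: (cong_in [::] [:: b] H); seq_norm.
Qed.

Lemma jump_left p z B : nondecr B -> all (fun x => x < p) B -> p <= z ->
  p :: B ++ [:: z] ≡ [:: p, z & B].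
Proof.
case/lastP: B => [|B b] Bb Bp pz; first exact: cong_refl.
apply: (@cong_trans (B ++ [:: p; b; z])); last exact: jump_left_rcons.
by apply: (cong_in [::] [:: z] (slide_right Bb Bp)); seq_norm.
Qed.

(** * Normal forms *)

Fixpoint normal_blocks (bs : seq (seq nat)) : bool :=
  if bs is B :: bs' then
    [&& B != [::], nondecr B, all (fun y => y < head 0 B) (flatten bs') & normal_blocks bs']
  else true.

Lemma normal_blocks1 B : B != [::] -> nondecr B -> normal_blocks [:: B].
Proof. by move=> /= -> ->. Qed.

Lemma all_below_last s B b : nondecr (rcons B b) ->
  all (fun y => y < head 0 (rcons B b)) s -> all (fun y => y < b) s.
Proof.
by move=> /nondecr_head_last hb sB; apply: all_ltn_trans sB _; rewrite headI.
Qed.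

Lemma jump_left_blocks bs p z : normal_blocks bs -> all (fun x => x < p) (flatten bs) ->
  p <= z -> p :: flatten bs ++ [:: z] ≡ [:: p, z & flatten bs].
Proof.
elim: bs p => [|B bs IH] p /=; first by move=> *; exact: cong_refl.
case/lastP: B => [|B b] //.
move=> /and4P[_ Bb bsB bsN]; rewrite all_cat => /andP[Bp _] pz.
have bp : b < p by move: Bp; rewrite all_rcons => /andP[].
have bsb : all (fun x => x < b) (flatten bs) := all_below_last Bb bsB.
apply: (@cong_trans (p :: B ++ [:: b, z & flatten bs])).
  have := IH b bsN bsb (ltnW (leq_trans bp pz)).
  by move/(cong_in (p :: B) [::]); apply; seq_norm.
by apply: (cong_in [::] (flatten bs) (jump_left Bb Bp pz)); seq_norm.
Qed.

Lemma swap_run_blocks Q q bs : nondecr (q :: Q) -> normal_blocks bs ->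
  all (fun x => x < q) (flatten bs) -> q :: flatten bs ++ Q ≡ q :: Q ++ flatten bs.
Proof.
elim: Q q => [|q' Q IH] q /=; first by rewrite cats0 => *; exact: cong_refl.
move=> /andP[/andP[qq' _] q'Q] bsN bsq.
apply: (@cong_trans [:: q, q' & flatten bs ++ Q]).
  by apply: (cong_in [::] Q (jump_left_blocks bsN bsq qq')); seq_norm.
by apply: (cong_in [:: q] [::] (IH q' q'Q bsN (all_ltn_trans bsq qq'))); seq_norm.
Qed.

Lemma swap_runs P Q z : P != [::] -> Q != [::] -> nondecr P -> nondecr Q ->
  all (leq^~ z) P -> all (fun x => z < x) Q -> P ++ Q ++ [:: z] ≡ Q ++ P ++ [:: z].
Proof.
move=> Pn0 Qn0; case: Q Qn0 => [|q Q] // _; case/lastP: P Pn0 => [|P p] // _ Pp qQ Pz Qz.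
have zq : z < q by case/andP: Qz.
have pz : p <= z by move: Pz; rewrite all_rcons => /andP[].
have Pq : all (fun x => x < q) (rcons P p) by apply/allP => x /(allP Pz); lia.
apply: (@cong_trans (rcons P p ++ [:: q, z & Q])).
  by apply: (cong_in (rcons P p) [::] (slide_left qQ zq)); seq_norm.
apply: (@cong_trans (P ++ [:: q; p; z] ++ Q)).
  by apply: (cong_in P Q (cong_acb pz zq)); seq_norm.
apply: (@cong_trans ((q :: rcons P p) ++ z :: Q)).
  by apply: cong_sym; apply: (cong_in [::] (z :: Q) (slide_right Pp Pq)); seq_norm.
have N := normal_blocks1 (rcons_neq0 (rcons P p) z) (nondecr_rcons Pp Pz).
have Nq : all (fun x => x < q) (flatten [:: rcons (rcons P p) z]).
  by rewrite /= cats0 all_rcons zq Pq.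
by apply: (cong_in [::] [::] (swap_run_blocks qQ N Nq)); seq_norm.
Qed.

Lemma slide_left_past q B Q z : B != [::] -> nondecr B -> all (fun x => x < z) B -> z < q ->
  nondecr (q :: Q) -> q :: B ++ Q ++ [:: z] ≡ q :: B ++ z :: Q.
Proof.
case: Q => [|q1 Q] Bn0 + Bz zq qQ; first by move=> *; exact: cong_refl.
case/lastP: B Bn0 Bz => [|B b] // _ Bz Bb.
have bz : b < z by move: Bz; rewrite all_rcons => /andP[].
have qq1 : q <= q1 by case/andP: qQ => /andP[].
have q1Q : nondecr (q1 :: Q) by case/andP: qQ.
have Bq : all (fun x => x < q) (rcons B b) by apply: all_ltn_trans Bz _; exact: ltnW.
apply: (@cong_trans (B ++ [:: q; b] ++ q1 :: Q ++ [:: z])).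
  by apply: (cong_in [::] (q1 :: Q ++ [:: z]) (slide_right Bb Bq)); seq_norm.
apply: (@cong_trans (B ++ [:: q; b] ++ [:: q1, z & Q])).
  by apply: (cong_in (B ++ [:: q; b]) [::] (slide_left q1Q (leq_trans zq qq1))); seq_norm.
apply: (@cong_trans (B ++ [:: b; q; z; q1] ++ Q)).
  by apply: (cong_in B Q (cong_cadb (ltnW bz) zq qq1)); seq_norm.
have Bbz : nondecr (rcons (rcons B b) z).
  by apply: nondecr_rcons => //; apply/allP => x /(allP Bz); lia.
have Bzq : all (fun x => x < q) (rcons (rcons B b) z) by rewrite all_rcons zq Bq.
by apply: cong_sym; apply: (cong_in [::] (q1 :: Q) (slide_right Bbz Bzq)); seq_norm.
Qed.

Lemma carry_right p q M b1 bt : nondecr (b1 :: rcons M bt) ->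
  all (fun x => x < p) (b1 :: rcons M bt) -> p <= q ->
  [:: p, b1, q & rcons M bt] ≡ b1 :: M ++ [:: p; bt; q].
Proof.
elim: M b1 => [|m M IH] b1 /=.
  by rewrite !andbT => b1bt /andP[_ btp] pq; exact: cong_cadb.
move=> /andP[/andP[b1m _] mM] /andP[b1p Mp] pq.
have mp : m < p by case/andP: Mp.
apply: (@cong_trans [:: b1, p, m, q & rcons M bt]).
  by apply: (cong_in [::] (rcons M bt) (cong_cadb b1m mp pq)); seq_norm.
by apply: (cong_in [:: b1] [::] (IH m mM Mp pq)); seq_norm.
Qed.

Lemma swap_pair_jump p q B z : B != [::] -> nondecr B -> all (fun x => x < p) B ->
  p <= z -> z < q -> [:: p, q & B ++ [:: z]] ≡ [:: q, p, z & B].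
Proof.
case: B => [|b1 B] // _; case/lastP: B => [|M bt].
  by move=> _ /= /andP[b1p _] pz zq; exact: cong_bdac.
move=> MB Mp pz zq.
have pq : p <= q by lia.
have b1p : b1 < p by case/andP: Mp.
have btp : bt < p by move: Mp => /= /andP[_]; rewrite all_rcons => /andP[].
have Mbt : nondecr (rcons (b1 :: M) bt) by [].
have M' : nondecr (b1 :: M) by move: Mbt; rewrite pairwise_rcons => /andP[].
have M'p : all (fun x => x < p) (b1 :: M) by move: Mp; rewrite -rcons_cons all_rcons => /andP[].
apply: (@cong_trans [:: p, b1, q & rcons M bt ++ [:: z]]).
  by apply: cong_sym; apply: (cong_in [::] (rcons M bt ++ [:: z]) (cong_bac b1p pq)); seq_norm.
apply: (@cong_trans (b1 :: M ++ [:: p; bt; q; z])).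
  by apply: (cong_in [::] [:: z] (carry_right MB Mp pq)); seq_norm.
apply: (@cong_trans (b1 :: M ++ [:: p; q; bt; z])).
  by apply: (cong_in (b1 :: M) [:: z] (cong_bac btp pq)); seq_norm.
apply: (@cong_trans (b1 :: M ++ [:: q; p; z; bt])).
  by apply: (cong_in (b1 :: M) [::] (cong_bdac btp pz zq)); seq_norm.
have Mpq : nondecr (rcons (b1 :: M) p).
  by apply: nondecr_rcons => //; apply/allP => x /(allP M'p); lia.
have Mq : all (fun x => x < q) (rcons (b1 :: M) p).
  by rewrite all_rcons; apply/andP; split; [lia | apply: all_ltn_trans M'p _; lia].
apply: (@cong_trans (q :: b1 :: M ++ [:: p; z; bt])).
  by apply: cong_sym; apply: (cong_in [::] [:: z; bt] (slide_right Mpq Mq)); seq_norm.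
apply: (@cong_trans (q :: b1 :: M ++ [:: p; bt; z])).
  by apply: cong_sym; apply: (cong_in (q :: b1 :: M) [::] (cong_bac btp pz)); seq_norm.
have Mbtp : all (fun x => x < p) (rcons (b1 :: M) bt) by rewrite all_rcons btp M'p.
apply: (@cong_trans [:: q, p & rcons (b1 :: M) bt ++ [:: z]]).
  by apply: cong_sym; apply: (cong_in [:: q] [:: z] (slide_right Mbt Mbtp)); seq_norm.
by apply: (cong_in [:: q] [::] (jump_left Mbt Mbtp pz)); seq_norm.
Qed.

Lemma swap_runs_split P Q B z : P != [::] -> Q != [::] -> B != [::] ->
  nondecr P -> nondecr Q -> nondecr B ->
  all (leq^~ z) P -> all (fun x => z < x) Q -> all (fun b => b < head 0 P) B ->
  P ++ Q ++ B ++ [:: z] ≡ Q ++ P ++ z :: B.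
Proof.
move=> Pn0 Qn0 Bn0 Pp qQ BB Pz Qz BP.
case: Q Qn0 qQ Qz => [|q Q] // _ qQ Qz.
case/lastP: P Pn0 Pp Pz BP => [|P p] // _ Pp Pz BP.
have zq : z < q by case/andP: Qz.
have pz : p <= z by move: Pz; rewrite all_rcons => /andP[].
have Bp : all (fun x => x < p) B := all_below_last Pp BP.
have Bz : all (fun x => x < z) B := all_ltn_trans Bp pz.
have Pq : all (fun x => x < q) (rcons P p) by apply/allP => x /(allP Pz); lia.
apply: (@cong_trans (rcons P p ++ q :: B ++ Q ++ [:: z])).
  have Bq : all (fun x => x < q) (flatten [:: B]).
    by rewrite /= cats0; exact: all_ltn_trans Bz (ltnW zq).
  apply: cong_sym; apply: (cong_in (rcons P p) [:: z]
    (swap_run_blocks qQ (normal_blocks1 Bn0 BB) Bq)); seq_norm.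
apply: (@cong_trans (rcons P p ++ q :: B ++ z :: Q)).
  by apply: (cong_in (rcons P p) [::] (slide_left_past Bn0 BB Bz zq qQ)); seq_norm.
apply: (@cong_trans (P ++ [:: q, p, z & B] ++ Q)).
  by apply: (cong_in P Q (swap_pair_jump Bn0 BB Bp pz zq)); seq_norm.
apply: (@cong_trans ((q :: rcons P p) ++ z :: B ++ Q)).
  by apply: cong_sym; apply: (cong_in [::] (z :: B ++ Q) (slide_right Pp Pq)); seq_norm.
have N : normal_blocks [:: rcons (rcons P p) z; B].
  apply/and4P; split; [exact: rcons_neq0 | exact: nondecr_rcons | | exact: normal_blocks1].
  by rewrite /= cats0; case: (P) BP.
have Nq : all (fun x => x < q) (flatten [:: rcons (rcons P p) z; B]).
  by rewrite /= cats0 all_cat all_rcons zq Pq (all_ltn_trans Bz (ltnW zq)).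
by apply: (cong_in [::] [::] (swap_run_blocks qQ N Nq)); seq_norm.
Qed.

Lemma swap_runs_blocks P Q bs z : P != [::] -> Q != [::] -> nondecr P -> nondecr Q ->
  normal_blocks bs -> all (leq^~ z) P -> all (fun x => z < x) Q ->
  all (fun y => y < head 0 P) (flatten bs) ->
  P ++ Q ++ flatten bs ++ [:: z] ≡ Q ++ P ++ z :: flatten bs.
Proof.
case: bs => [|B bs] Pn0 Qn0 Pp Qq N Pz Qz bsP /=.
  exact: swap_runs.
case/and4P: N => Bn0 BB bsB N; rewrite all_cat in bsP; case/andP: bsP => BP _.
case/lastP: B Bn0 BB bsB BP => [|B b] // _ BB bsB BP.
have bz : b <= z.
  case: (P) Pn0 Pz BP => [|h P'] //= _ /andP[hz _].
  by rewrite all_rcons => /andP[bh _]; lia.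
apply: (@cong_trans (P ++ Q ++ rcons B b ++ z :: flatten bs)).
  have := jump_left_blocks N (all_below_last BB bsB) bz.
  by move/(cong_in (P ++ Q ++ B) [::]); apply; seq_norm.
have := swap_runs_split Pn0 Qn0 (rcons_neq0 B b) Pp Qq BB Pz Qz BP.
by move/(cong_in [::] (flatten bs)); apply; seq_norm.
Qed.

Lemma append_to_block B bs z : normal_blocks bs -> nondecr B -> B != [::] ->
  all (leq^~ z) B -> all (fun y => y < head 0 B) (flatten bs) ->
  rcons (B ++ flatten bs) z ≡ rcons B z ++ flatten bs.
Proof.
case/lastP: B => [|B b] // N Bb _ Bz bsB.
have bz : b <= z by move: Bz; rewrite all_rcons => /andP[].
have := jump_left_blocks N (all_below_last Bb bsB) bz.
by move/(cong_in B [::]); apply; seq_norm.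
Qed.

Fixpoint insert_blocks (bs : seq (seq nat)) (z : nat) : seq (seq nat) :=
  if bs is B :: bs' then
    if z < head 0 B then B :: insert_blocks bs' z
    else if [seq c <- B | z < c] is [::] then rcons B z :: bs'
    else [seq c <- B | z < c] :: rcons [seq c <- B | c <= z] z :: bs'
  else [:: [:: z]].

Definition blocks_of (u : seq nat) : seq (seq nat) := foldl insert_blocks [::] u.

Lemma nondecr_filter_split B z :
  nondecr B -> [seq c <- B | c <= z] ++ [seq c <- B | z < c] = B.
Proof.
elim: B => [|h B IH] //= /andP[hB BB].
case: leqP => hz /=; first by rewrite IH.
have Bz : all (fun c => z < c) B by apply/allP => x /(allP hB); lia.
have -> : [seq c <- B | c <= z] = [::].
  by apply/eqP; rewrite -[_ == _]negbK -has_filter; apply/hasPn => x /(allP Bz); lia.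
by move/all_filterP: Bz => ->.
Qed.

Lemma filter_leq_perm B z :
  perm_eq ([seq c <- B | z < c] ++ [seq c <- B | c <= z]) B.
Proof.
rewrite (@eq_filter _ (fun c => c <= z) (predC (fun c => z < c))); last by move=> c /=; lia.
by rewrite perm_filterC.
Qed.

Lemma insert_blocks_perm bs z :
  perm_eq (flatten (insert_blocks bs z)) (rcons (flatten bs) z).
Proof.
elim: bs => [|B bs IH] //=.
case: ifP => _; first by rewrite /= rcons_cat perm_cat2l.
apply/permP => f; have := permP (filter_leq_perm B z) f.
case: [seq c <- B | z < c] => [|g G] /=; rewrite -!cats1 !count_cat /=; lia.
Qed.

Lemma insert_blocks_normal bs z : normal_blocks bs -> normal_blocks (insert_blocks bs z).
Proof.
elim: bs => [|B bs IH] //=.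
case: B => [|h B] //= /and3P[hB bsh N].
case: ltnP => [zh | hz] /=.
  by rewrite hB (perm_all _ (insert_blocks_perm bs z)) all_rcons zh bsh IH.
have hBs : nondecr (h :: B) := hB.
case/andP: hB => hB BB.
have Fz : all (leq^~ z) [seq c <- B | c <= z] by apply/allP => c; rewrite mem_filter => /andP[].
have hFz : nondecr (rcons (h :: [seq c <- B | c <= z]) z).
  apply: nondecr_rcons; last by rewrite /= hz Fz.
  by move: (pairwise_filter (fun c => c <= z) hBs); rewrite /= hz.
move: hFz => /= hFz.
case E: [seq c <- B | z < c] => [|g G] /=.
  have Bz : all (leq^~ z) (h :: B).
    by rewrite /= hz -(nondecr_filter_split z BB) E cats0 Fz.
  by move: (nondecr_rcons hBs Bz) => /= ->; rewrite bsh N.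
have gB : g \in [seq c <- B | z < c] by rewrite E mem_head.
move: (gB); rewrite mem_filter => /andP[zg /(allP hB) hg].
have gG : nondecr (g :: G) by rewrite -E pairwise_filter.
move: gG => /= ->; rewrite hFz bsh N all_cat all_rcons zg !andbT /=.
rewrite (leq_ltn_trans hz zg) (all_ltn_trans bsh hg) andbT.
by apply/allP => c /(allP Fz); lia.
Qed.

Lemma insert_blocks_cong bs z :
  normal_blocks bs -> rcons (flatten bs) z ≡ flatten (insert_blocks bs z).
Proof.
elim: bs => [|B bs IH] /=; first by move=> _; exact: cong_refl.
case: B => [|h B] //= /and3P[hB bsh N].
case: ltnP => [zh | hz] /=.
  by apply: (cong_in (h :: B) [::] (IH N)); seq_norm.
have hBs : nondecr (h :: B) := hB.
have split : h :: B = (h :: [seq c <- B | c <= z]) ++ [seq c <- B | z < c].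
  by rewrite cat_cons nondecr_filter_split //; case/andP: hB.
have hFz : all (leq^~ z) (h :: [seq c <- B | c <= z]).
  by rewrite /= hz; apply/allP => c; rewrite mem_filter => /andP[].
case E: [seq c <- B | z < c] => [|g G] /=.
  have Bz : all (leq^~ z) (h :: B) by rewrite E cats0 in split; rewrite split.
  exact: append_to_block N hBs isT Bz bsh.
have Gz : all (fun x => z < x) (g :: G).
  by rewrite -E; apply/allP => c; rewrite mem_filter => /andP[].
rewrite E in split; move: (hBs); rewrite split pairwise_cat => /and3P[_ hF gG].
have := @swap_runs_blocks (h :: _) (g :: G) bs z isT isT hF gG N hFz Gz bsh.
by move/(cong_in [::] [::]); apply; [rewrite -rcons_cons -cat_cons split | ]; seq_norm.
Qed.

Lemma blocks_of_normal u : normal_blocks (blocks_of u).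
Proof.
elim/last_ind: u => [|u z IH] //.
by rewrite /blocks_of foldl_rcons; apply: insert_blocks_normal.
Qed.

Lemma cong_blocks_of u : u ≡ flatten (blocks_of u).
Proof.
elim/last_ind: u => [|u z IH]; first exact: cong_refl.
rewrite /blocks_of foldl_rcons -/(blocks_of u).
apply: cong_trans (insert_blocks_cong z (blocks_of_normal u)).
by apply: (cong_in [::] [:: z] IH); seq_norm.
Qed.

(** * The invariant of the congruence *)

Fixpoint precedes (y x : nat) (w : seq nat) : bool :=
  if w is c :: w' then ((c == y) && (x \in w')) || precedes y x w' else false.

Definition adjacent (w : seq nat) (x y : nat) : bool :=
  [&& x < y, x \in w, y \in w & all (fun c => ~~ (x < c < y)) w].

Definition hypo_equiv (u v : seq nat) : Prop :=
  perm_eq u v /\ forall x y, adjacent u x y -> precedes y x u = precedes y x v.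

Lemma precedes_cat y x s t :
  precedes y x (s ++ t) = [|| precedes y x s, (y \in s) && (x \in t) | precedes y x t].
Proof.
elim: s => [|c s IH] //=.
rewrite IH mem_cat inE [y == c]eq_sym.
by case: (c == y); case: (x \in s); case: (x \in t); case: (precedes y x s);
   case: (y \in s); case: (precedes y x t).
Qed.

Lemma precedes_mem y x w : precedes y x w -> (y \in w) && (x \in w).
Proof.
elim: w => [|c w IH] //= /orP[/andP[/eqP -> xw]|/IH /andP[yw xw]].
  by rewrite mem_head inE xw orbT.
by rewrite !inE yw xw !orbT.
Qed.

Lemma precedes_notin y x w : (y \notin w) || (x \notin w) -> precedes y x w = false.
Proof. by move=> H; apply/negP => /precedes_mem /andP[yw xw]; rewrite yw xw in H. Qed.

Lemma precedes_nondecr y x s : nondecr s -> x < y -> precedes y x s = false.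
Proof.
elim: s => [|c s IH] //= /andP[cs ss] xy.
rewrite IH // orbF; apply/negP => /andP[/eqP cy xs].
by move: (allP cs x xs); rewrite cy; lia.
Qed.

Lemma rel_perm l r : hypo_rel l r -> perm_eq l r.
Proof.
case=> [[a [b [c [_ _ -> ->]]]]|[[a [b [c [_ _ -> ->]]]]|
        [[a [b [c [d [_ _ _ -> ->]]]]]|[a [b [c [d [_ _ _ -> ->]]]]]]]].
all: by apply/permP => f /=; lia.
Qed.

(* Whenever a relation swaps two letters [x < y] with no letter strictly between,
   a second copy of [x] or [y] keeps their relative order. *)
Lemma rel_precedes l r x y : hypo_rel l r -> x < y ->
  all (fun c => ~~ (x < c < y)) l -> precedes y x l = precedes y x r.
Proof.
have outside c : ~~ (x < c < y) -> c <= x \/ y <= c by case: ltnP; case: ltnP; lia.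
case=> [[a [b [c [? ? -> ->]]]]|[[a [b [c [? ? -> ->]]]]|
        [[a [b [c [d [? ? ? -> ->]]]]]|[a [b [c [d [? ? ? -> ->]]]]]]]] xy /=;
  rewrite ?andbT => H;
  repeat match goal with H : is_true (_ && _) |- _ => case/andP: H => /outside ? H end;
  move/outside: H => ?; rewrite !inE ?andbT ?orbF;
  repeat match goal with |- context [?u == ?v] => case: (u =P v) => ? end;
  by [|lia].
Qed.

Lemma adjacent_perm u v x y : perm_eq u v -> adjacent u x y = adjacent v x y.
Proof. by move=> uv; rewrite /adjacent !(perm_mem uv) (perm_all _ uv). Qed.

Lemma hypo_equiv_refl u : hypo_equiv u u. Proof. by []. Qed.

Lemma hypo_equiv_sym u v : hypo_equiv u v -> hypo_equiv v u.
Proof.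
move=> [uv H]; split=> [|x y xy]; first by rewrite perm_sym.
by rewrite H // (adjacent_perm _ _ uv).
Qed.

Lemma hypo_equiv_trans v u w : hypo_equiv u v -> hypo_equiv v w -> hypo_equiv u w.
Proof.
move=> [uv H1] [vw H2]; split=> [|x y xy]; first exact: perm_trans vw.
by rewrite H1 // H2 // -(adjacent_perm _ _ uv).
Qed.

Lemma step_hypo_equiv u v : hypo_step u v -> hypo_equiv u v.
Proof.
move=> [p [q [l [r [lr -> ->]]]]]; have lr_perm := rel_perm lr.
split=> [|x y /and4P[xy _ _ H]]; first by rewrite perm_cat2l perm_cat2r.
have Hl : all (fun c => ~~ (x < c < y)) l.
  by apply/allP => c cl; apply: (allP H); rewrite !mem_cat cl orbT.
by rewrite !precedes_cat (rel_precedes lr xy Hl) !mem_cat !(perm_mem lr_perm).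
Qed.

Lemma cong_hypo_equiv u v : u ≡ v -> hypo_equiv u v.
Proof.
elim=> {u v} [u v | u | u v _ | u v w _ IH1 _]; first exact: step_hypo_equiv.
- exact: hypo_equiv_refl.
- exact: hypo_equiv_sym.
- exact: hypo_equiv_trans.
Qed.

Definition no_inversion_above (w : seq nat) (v : nat) : Prop :=
  forall a b, v <= a -> adjacent w a b -> precedes b a w = false.

Lemma no_inversion_above_equiv u w v :
  hypo_equiv u w -> no_inversion_above u v -> no_inversion_above w v.
Proof.
move=> [uw H] Hu a b va ab.
have ab_u : adjacent u a b by rewrite (adjacent_perm _ _ uw).
by rewrite -H // Hu.
Qed.

Lemma exists_max (s : seq nat) : s != [::] -> exists2 a, a \in s & all (leq^~ a) s.
Proof.
elim: s => [|c s IH] // _; case: s IH => [|d s] IH.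
  by exists c; rewrite ?mem_head //= leqnn.
have [a ads aM] := IH isT; case: (leqP c a) => ca.
  by exists a; [rewrite inE ads orbT | move: aM => /= ->; rewrite ca].
exists c; first exact: mem_head.
by apply/allP => x; rewrite inE => /orP[/eqP -> // | /(allP aM)]; lia.
Qed.

Lemma first_blockP h B bs v : normal_blocks ((h :: B) :: bs) ->
  v \in (h :: B) ++ flatten bs ->
  (v \in h :: B <-> no_inversion_above ((h :: B) ++ flatten bs) v).
Proof.
move=> /and4P[_ hB bsh _] vw.
have hB_ge : all (leq h) (h :: B) by rewrite /= leqnn; case/andP: hB.
have below_h x : x \in flatten bs -> x < h by move/(allP bsh).
split=> [vB a b va /and4P[ab aw bw _] | Hv].
  have hv := allP hB_ge v vB.
  have above_tail x : v <= x -> x \notin flatten bs.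
    by move=> vx; apply/negP => /below_h; lia.
  rewrite precedes_cat (precedes_nondecr hB ab) (negbTE (above_tail _ va)) andbF /=.
  by rewrite precedes_notin // above_tail //; lia.
apply/negPn/negP => vB.
have vbs : v \in flatten bs by move: vw; rewrite mem_cat (negbTE vB).
have [a a_bs amax] : exists2 a, a \in flatten bs & all (leq^~ a) (flatten bs).
  by apply: exists_max; case: (flatten bs) vbs.
have ah : a < h := below_h a a_bs.
have adj : adjacent ((h :: B) ++ flatten bs) a h.
  apply/and4P; split=> //; rewrite ?mem_cat ?a_bs ?mem_head ?orbT //.
  by apply/allP => c; rewrite mem_cat => /orP[/(allP hB_ge)|/(allP amax)] /=; lia.
have := Hv a h (allP amax v vbs) adj.
by rewrite precedes_cat mem_head a_bs /= orbT.
Qed.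

Lemma first_block_mem_equiv h B h' C bs cs v :
  normal_blocks ((h :: B) :: bs) -> normal_blocks ((h' :: C) :: cs) ->
  hypo_equiv ((h :: B) ++ flatten bs) ((h' :: C) ++ flatten cs) ->
  v \in h :: B -> v \in h' :: C.
Proof.
move=> NB NC E vB.
have vw : v \in (h' :: C) ++ flatten cs by rewrite -(perm_mem E.1) mem_cat vB.
apply/(first_blockP NC vw)/(no_inversion_above_equiv E).
by apply/(first_blockP NB); rewrite ?mem_cat ?vB.
Qed.

Lemma normal_first_block B C bs cs :
  normal_blocks (B :: bs) -> normal_blocks (C :: cs) ->
  hypo_equiv (B ++ flatten bs) (C ++ flatten cs) -> B = C.
Proof.
case: B => [|h B] //; case: C => [|h' C] // NB NC E.
have [w_perm _] := E.
have memBC v : (v \in h :: B) = (v \in h' :: C).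
  apply/idP/idP; first exact: first_block_mem_equiv NB NC E.
  exact: first_block_mem_equiv NC NB (hypo_equiv_sym E).
have notin_tail h0 B0 bs0 v : normal_blocks ((h0 :: B0) :: bs0) -> v \in h0 :: B0 ->
    count_mem v (flatten bs0) = 0.
  move=> /and4P[_ /andP[hB0 _] bsh _] vB; apply/count_memPn/negP => /(allP bsh).
  by move: vB; rewrite inE => /orP[/eqP -> | /(allP hB0)] /=; lia.
case/and4P: (NB) => _ hB _ _; case/and4P: (NC) => _ hC _ _.
apply: (sorted_eq leq_trans anti_leq); rewrite ?(sorted_pairwise leq_trans) //.
apply/allP => v _; apply/eqP; case vB : (v \in h :: B).
  have vC : v \in h' :: C by rewrite -memBC.
  have := permP w_perm (pred1 v).
  by rewrite !count_cat (notin_tail _ _ _ _ NB vB) (notin_tail _ _ _ _ NC vC) !addn0.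
have vC : (v \in h' :: C) = false by rewrite -memBC.
by rewrite (count_memPn (negbT vB)) (count_memPn (negbT vC)).
Qed.

Lemma hypo_equiv_cat2l B X Y : {in X ++ Y & B, forall x c, x < c} ->
  hypo_equiv (B ++ X) (B ++ Y) -> hypo_equiv X Y.
Proof.
move=> XYB [BXY H]; split=> [|a b ab]; first by rewrite -(perm_cat2l B).
have /and4P[lt_ab aX bX nb] := ab.
have bB : b \notin B.
  by apply/negP => bB; have := XYB b b; rewrite mem_cat bX => /(_ isT bB); lia.
have ab_BX : adjacent (B ++ X) a b.
  rewrite /adjacent lt_ab !mem_cat aX bX !orbT all_cat nb andbT /=.
  by apply/allP => c cB; have := XYB b c; rewrite mem_cat bX => /(_ isT cB); lia.
have := H a b ab_BX.
have no_b : precedes b a B = false by rewrite precedes_notin ?bB.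
by rewrite !precedes_cat no_b (negbTE bB).
Qed.

Lemma normal_blocks_unique bs cs : normal_blocks bs -> normal_blocks cs ->
  hypo_equiv (flatten bs) (flatten cs) -> flatten bs = flatten cs.
Proof.
elim: bs cs => [|B bs IH] [|C cs] //=.
- by case: C => [|c C] //= _ _ [/perm_size].
- by case: B => [|b B] //= _ _ [/perm_size].
move=> NB NC E; have BC := normal_first_block NB NC E; subst C.
case: B NB NC E => [|h B] // /and4P[_ hB bsh Nbs] /and4P[_ _ csh Ncs] E.
congr (_ ++ _); apply: IH => //; apply: hypo_equiv_cat2l E => x c xs cB.
have hc : h <= c by move: cB; rewrite inE => /orP[/eqP -> // | /(allP (proj1 (andP hB)))].
by move: xs; rewrite mem_cat => /orP[/(allP bsh) | /(allP csh)] /=; lia.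
Qed.

Lemma hypo_equiv_cong u v : hypo_equiv u v -> u ≡ v.
Proof.
move=> E; have uN := cong_blocks_of u; have vN := cong_blocks_of v.
have same_normal : flatten (blocks_of u) = flatten (blocks_of v).
  apply: normal_blocks_unique; rewrite ?blocks_of_normal //.
  apply: hypo_equiv_trans (cong_hypo_equiv vN).
  by apply: hypo_equiv_trans E; apply/hypo_equiv_sym/cong_hypo_equiv.
by apply: cong_trans uN _; rewrite same_normal; exact: cong_sym.
Qed.

(** * Distances in the cyclic shift graph *)

Lemma ev_eq_perm s t : ev_eq s t <-> perm_eq s t.
Proof.
split=> [st | /permP st a]; last exact: st.
by apply/allP => x _; apply/eqP; exact: st.
Qed.

Lemma cshift_perm A s t : cshift A s t -> perm_eq s t.
Proof.
move=> [x [y [_ _ /cong_hypo_equiv [sxy _] /cong_hypo_equiv [tyx _]]]].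
by apply: perm_trans sxy _; rewrite perm_catC perm_sym.
Qed.

Lemma walk_perm A k s t : walk A k s t -> perm_eq s t.
Proof.
elim: k s => [|k IH] s /=; first by case/cong_hypo_equiv.
by move=> [w [_ [sw wt]]]; apply: perm_trans (cshift_perm sw) (IH w wt).
Qed.

Lemma adjacent_uniq w a y x z :
  adjacent w a y -> adjacent w x z -> x <= a < z -> x = a /\ z = y.
Proof.
move=> /and4P[ay aw yw ay_gap] /and4P[xz xw zw xz_gap] /andP[xa az].
have xa_eq : x = a.
  apply/eqP; rewrite eqn_leq xa /=; apply: contraT; rewrite -ltnNge => lt_xa.
  by move: (allP xz_gap a aw); rewrite lt_xa az.
subst x; split=> //; case: (ltngtP z y) => // zy.
- by move: (allP ay_gap z zw); rewrite az zy.
- by move: (allP xz_gap y yw); rewrite ay zy.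
Qed.

Definition cut_word (a : nat) (w : seq nat) (b : bool) : seq nat :=
  if b then [seq c <- w | a < c] ++ [seq c <- w | c <= a]
  else [seq c <- w | c <= a] ++ [seq c <- w | a < c].

Lemma cut_word_perm a w b : perm_eq (cut_word a w b) w.
Proof.
by rewrite /cut_word; case: b; [|rewrite perm_catC]; exact: filter_leq_perm.
Qed.

Lemma cshift_cut_word A a w b : all A w -> cshift A (cut_word a w b) (cut_word a w (~~ b)).
Proof.
have allA P : all A w -> all A [seq c <- w | P c].
  by move=> wA; apply/allP => c; rewrite mem_filter => /andP[_ /(allP wA)].
by move=> wA; case: b; [exists [seq c <- w | a < c], [seq c <- w | c <= a] |
  exists [seq c <- w | c <= a], [seq c <- w | a < c]]; split; rewrite ?allA //; exact: cong_refl.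
Qed.

Lemma precedes_filter (P : pred nat) y x w : P x -> P y ->
  precedes y x [seq c <- w | P c] = precedes y x w.
Proof.
move=> Px Py; elim: w => [|c w IH] //=; case Pc: (P c) => /=.
  by rewrite mem_filter Px IH.
by rewrite IH; case: eqP => [cy|] //=; rewrite cy Py in Pc.
Qed.

Lemma precedes_cut_word_same a w b x z : x < z -> ~~ (x <= a < z) ->
  precedes z x (cut_word a w b) = precedes z x w.
Proof.
move=> xz xaz; have [za | az] := leqP z a.
  have xa : x <= a by lia.
  have notG c : c <= a -> (c \in [seq c <- w | a < c]) = false.
    by move=> ca; rewrite mem_filter ltnNge ca.
  have noG : precedes z x [seq c <- w | a < c] = false.
    by apply: precedes_notin; rewrite notG.
  by case: b; rewrite /cut_word precedes_cat noG ?(notG z za) ?(notG x xa) /= ?andbF ?orbF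
    precedes_filter.
have ax : a < x by move: xaz; rewrite az andbT -ltnNge.
have notF c : a < c -> (c \in [seq c <- w | c <= a]) = false.
  by move=> ac; rewrite mem_filter leqNgt ac.
have noF : precedes z x [seq c <- w | c <= a] = false.
  by apply: precedes_notin; rewrite notF.
by case: b; rewrite /cut_word precedes_cat noF ?(notF z az) ?(notF x ax) /= ?andbF ?orbF
  precedes_filter.
Qed.

Lemma precedes_cut_word_at a w b x z : x <= a -> a < z -> x \in w -> z \in w ->
  precedes z x (cut_word a w b) = b.
Proof.
move=> xa az xw zw.
have xF : x \in [seq c <- w | c <= a] by rewrite mem_filter xa.
have zG : z \in [seq c <- w | a < c] by rewrite mem_filter az.
have xG : (x \in [seq c <- w | a < c]) = false by rewrite mem_filter ltnNge xa.
have zF : (z \in [seq c <- w | c <= a]) = false by rewrite mem_filter leqNgt az.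
have noF : precedes z x [seq c <- w | c <= a] = false by apply: precedes_notin; rewrite zF.
have noG : precedes z x [seq c <- w | a < c] = false by apply: precedes_notin; rewrite xG orbT.
by case: b; rewrite /cut_word precedes_cat noF noG ?xF ?zG ?xG ?zF ?orbT.
Qed.

Lemma precedes_cut_word_other a y w b x z : adjacent w a y -> adjacent w x z -> x != a ->
  precedes z x (cut_word a w b) = precedes z x w.
Proof.
move=> ay xz xa; apply: precedes_cut_word_same; first by case/and4P: xz.
by apply/negP => /(adjacent_uniq ay xz) [x_a _]; rewrite x_a eqxx in xa.
Qed.

Lemma hypo_equiv_cut_word a y w :
  adjacent w a y -> hypo_equiv w (cut_word a w (precedes y a w)).
Proof.
move=> ay; split=> [|x z xz]; first by rewrite perm_sym cut_word_perm.
have [x_a | xa] := eqVneq x a; last by rewrite (precedes_cut_word_other _ ay).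
subst x; have [_ z_y] : a = a /\ z = y.
  have az : a < z by case/and4P: xz.
  by apply: (adjacent_uniq ay xz); rewrite leqnn.
by subst z; case/and4P: ay => ay aw yw _; rewrite precedes_cut_word_at.
Qed.

Lemma cshift_congl (A : pred nat) s s' t : s ≡ s' -> cshift A s' t -> cshift A s t.
Proof.
by move=> ss' [x [y [xA yA s'xy tyx]]]; exists x, y; split=> //; apply: cong_trans s'xy.
Qed.

(* Fixing the inversion at the adjacent pair [(k.+1, y)] costs one cyclic shift
   (a [cut_word] at [k.+1]) and leaves all other adjacent pairs alone. *)
Lemma dist_le_adjacent_agree (A : pred nat) v k w : (forall c, A c -> 0 < c) -> all A w ->
  perm_eq w v -> (forall x y, adjacent w x y -> k < x -> precedes y x w = precedes y x v) ->
  dist_le A w v k.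
Proof.
move=> Apos; elim: k w => [|k IH] w wA wv agree.
  exists 0; split=> //=; apply: hypo_equiv_cong; split=> // x y xy.
  by apply: agree => //; case/and4P: xy => _ xw _ _; exact: Apos (allP wA x xw).
case: (boolP (has (fun y => adjacent w k.+1 y && (precedes y k.+1 w != precedes y k.+1 v)) w)).
  case/hasP => y _ /andP[ky differ].
  set w' := cut_word k.+1 w (~~ precedes y k.+1 w).
  have w'w : perm_eq w' w := cut_word_perm _ _ _.
  have w'A : all A w' by rewrite (perm_all _ w'w).
  have [j [jk w'v]] : exists j, j <= k /\ walk A j w' v.
    apply: IH => [||x z xz kx]; [exact: w'A | exact: perm_trans wv |].
    rewrite (adjacent_perm _ _ w'w) in xz.
    have [x_k | xk] := eqVneq x k.+1; last first.
      by rewrite (precedes_cut_word_other _ ky) // agree //; lia.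
    subst x; have [_ z_y] : k.+1 = k.+1 /\ z = y.
      have kz : k.+1 < z by case/and4P: xz.
      by apply: (adjacent_uniq ky xz); rewrite leqnn.
    subst z; have /and4P[ky' kw yw _] := ky; rewrite precedes_cut_word_at //.
    by move: differ; case: (precedes _ _ w); case: (precedes _ _ v).
  exists j.+1; split=> //; exists w'; split=> //; split=> //.
  apply: cshift_congl (hypo_equiv_cong (hypo_equiv_cut_word ky)) _.
  exact: cshift_cut_word.
move/hasPn => agree_k.
have [j [jk wv_j]] : exists j, j <= k /\ walk A j w v.
  apply: IH => // x z xz kx; have [x_k | xk] := eqVneq x k.+1; last first.
    by apply: agree => //; lia.
  subst x; have zw : z \in w by case/and4P: xz.
  by move: (agree_k z zw); rewrite xz /= negbK => /eqP.
by exists j; split=> //; exact: leqW.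
Qed.

(** * A lower bound on distances *)

Definition adj_inversions (n : nat) (w : seq nat) : nat :=
  count (fun a => precedes a.+1 a w) (iota 1 n.-1).

Lemma adjacent_iota n w a : perm_eq w (iota 1 n) -> 0 < a < n -> adjacent w a a.+1.
Proof.
move=> wn /andP[a0 an]; apply/and4P; split=> //; rewrite ?(perm_mem wn) ?mem_iota; try lia.
by apply/allP => c _; lia.
Qed.

Lemma adj_inversions_equiv n w w' : perm_eq w (iota 1 n) -> hypo_equiv w w' ->
  adj_inversions n w = adj_inversions n w'.
Proof.
move=> wn [_ H]; apply: eq_in_count => a; rewrite mem_iota => a_range.
by apply: H; apply: (adjacent_iota wn); lia.
Qed.

Lemma count_add_eq_in (p1 q1 p2 q2 : pred nat) s :
  {in s, forall a, p1 a + q1 a = p2 a + q2 a} ->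
  count p1 s + count q1 s = count p2 s + count q2 s.
Proof.
elim: s => [|c s IH] //= H.
have := H c (mem_head _ _); have := IH (fun a sa => H a (mem_behead (s := c :: s) sa)); lia.
Qed.

Lemma count_telescope (b : nat -> bool) k m :
  count (fun a => b a && ~~ b a.+1) (iota k m) + b (k + m) =
  count (fun a => ~~ b a && b a.+1) (iota k m) + b k.
Proof.
elim: m k => [|m IH] k /=; first by rewrite addn0.
by have := IH k.+1; rewrite addSnnS; case: (b k); case: (b k.+1) => /=; lia.
Qed.

(* The order of [a] and [a.+1] changes between [x ++ y] and [y ++ x] exactly when
   one of them lies in [x] and the other one in [y]. *)
Lemma precedes_swap_cat x y a : uniq (x ++ y) -> a \in x ++ y -> a.+1 \in x ++ y ->
  precedes a.+1 a (y ++ x) + (~~ (a \in x) && (a.+1 \in x)) =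
  precedes a.+1 a (x ++ y) + ((a \in x) && ~~ (a.+1 \in x)).
Proof.
move=> xy_uniq axy a1xy.
have in_y c : c \in x ++ y -> (c \in y) = ~~ (c \in x).
  move: xy_uniq; rewrite cat_uniq mem_cat => /and3P[_ /hasPn xy _].
  case cx: (c \in x) => /= cy; last exact: cy.
  by apply/negbTE/negP => /xy; rewrite /= cx.
have px : precedes a.+1 a x -> (a \in x) && (a.+1 \in x) by move/precedes_mem => /andP[-> ->].
have py : precedes a.+1 a y -> ~~ (a \in x) && ~~ (a.+1 \in x).
  by move/precedes_mem; rewrite (in_y _ axy) (in_y _ a1xy) andbC.
rewrite !precedes_cat (in_y _ axy) (in_y _ a1xy).
move: px py; case: (a \in x); case: (a.+1 \in x);
  case: (precedes a.+1 a x); case: (precedes a.+1 a y) => //= px py.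
all: by [move: (px isT) | move: (py isT)].
Qed.

(* Summing [precedes_swap_cat] over [a], the number of boundary crossings
   from [x] to [y] exceeds those from [y] to [x] by at most one. *)
Lemma adj_inversions_rot n x y : perm_eq (x ++ y) (iota 1 n) ->
  adj_inversions n (y ++ x) <= (adj_inversions n (x ++ y)).+1.
Proof.
move=> xyn; have xy_uniq : uniq (x ++ y) by rewrite (perm_uniq xyn) iota_uniq.
set b := fun c => c \in x.
have pointwise : {in iota 1 n.-1, forall a,
    precedes a.+1 a (y ++ x) + (~~ b a && b a.+1) =
    precedes a.+1 a (x ++ y) + (b a && ~~ b a.+1)}.
  move=> a; rewrite mem_iota => a_range.
  by apply: precedes_swap_cat; rewrite // (perm_mem xyn) mem_iota; lia.
have := count_add_eq_in pointwise; have := count_telescope b 1 n.-1.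
by rewrite /adj_inversions; case: (b 1); case: (b (1 + n.-1)) => /=; lia.
Qed.

Lemma adj_inversions_walk (A : pred nat) n j s t : perm_eq s (iota 1 n) ->
  walk A j s t -> adj_inversions n t <= adj_inversions n s + j.
Proof.
elim: j s => [|j IH] s sn.
  by move/cong_hypo_equiv => st; rewrite (adj_inversions_equiv sn st) addn0.
move=> [w [_ [[x [y [_ _ /cong_hypo_equiv sxy /cong_hypo_equiv wyx]] wt]]]].
have xyn : perm_eq (x ++ y) (iota 1 n) by apply: perm_trans sn; rewrite perm_sym; case: sxy.
have wn : perm_eq w (iota 1 n).
  by apply: perm_trans (wyx.1) _; rewrite perm_catC.
have := IH w wn wt; rewrite (adj_inversions_equiv sn sxy) (adj_inversions_equiv wn wyx) => H.
by apply: (leq_trans H); rewrite -addSnnS leq_add2r; exact: adj_inversions_rot.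
Qed.

Lemma adj_inversions_iota n : adj_inversions n (iota 1 n) = 0.
Proof.
apply/eqP; rewrite -leqn0 leqNgt -has_count; apply/hasPn => a _.
by rewrite precedes_nondecr // -(sorted_pairwise leq_trans) iota_sorted.
Qed.

Lemma adj_inversions_rev_iota n : adj_inversions n (rev (iota 1 n)) = n.-1.
Proof.
rewrite /adj_inversions -[RHS](size_iota 1) -count_predT.
apply: eq_in_count => a; rewrite mem_iota => a_range /=.
rewrite -(subnKC (_ : a <= n)); last by lia.
by rewrite iotaD rev_cat precedes_cat !mem_rev !mem_iota; apply/orP; right; apply/orP; left; lia.
Qed.

Lemma dist_le_perm (A : pred nat) m s t : (forall c, A c -> 0 < c) -> all A s ->
  all (leq^~ m) s -> perm_eq s t -> dist_le A s t m.-1.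
Proof.
move=> Apos sA sm st; apply: dist_le_adjacent_agree => // x y /and4P[xy _ ys _] mx.
by have := allP sm y ys; lia.
Qed.

Lemma walk_iota_rev_ge (A : pred nat) n j :
  walk A j (iota 1 n) (rev (iota 1 n)) -> n.-1 <= j.
Proof.
move/(adj_inversions_walk (perm_refl _)).
by rewrite adj_inversions_iota adj_inversions_rev_iota.
Qed.

Lemma dist_eq_iota_rev n :
  dist_eq (alphAn n) (iota 1 n) (rev (iota 1 n)) (n - 1).
Proof.
have iotaA : all (alphAn n) (iota 1 n).
  by apply/allP => c; rewrite mem_iota /alphAn; lia.
have [j [jn walk_j]] : dist_le (alphAn n) (iota 1 n) (rev (iota 1 n)) n.-1.
  apply: dist_le_perm iotaA _ _ => [c /andP[] // | | ]; last by rewrite perm_sym perm_rev.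
  by apply/allP => c; rewrite mem_iota; lia.
have j_eq : j = n - 1 by have := walk_iota_rev_ge walk_j; lia.
split=> [|i lt_i walk_i]; first by rewrite -j_eq.
by have := walk_iota_rev_ge walk_i; lia.
Qed.

Theorem mainTheorem1 :
  (forall s t : seq nat, all alphA s -> all alphA t ->
     (connected alphA s t <-> ev_eq s t)) /\
  (forall n : nat, 1 <= n ->
     (forall s t : seq nat, all (alphAn n) s -> all (alphAn n) t ->
        connected (alphAn n) s t -> dist_le (alphAn n) s t (n - 1)) /\
     (exists s t : seq nat, [/\ all (alphAn n) s, all (alphAn n) t &
        dist_eq (alphAn n) s t (n - 1)])).
Proof.
split=> [s t sA _ | n _].
  split=> [[k /walk_perm] | /ev_eq_perm st]; first by move/ev_eq_perm.
  have sm : all (leq^~ (\max_(c <- s) c)) s by apply/allP => c cs; exact: leq_bigmax_seq.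
  by have [j [_ walk_j]] := dist_le_perm (fun c c_pos => c_pos) sA sm st; exists j.
have An_pos c : alphAn n c -> 0 < c by case/andP.
split=> [s t sA _ [k /walk_perm st] | ].
  have sn : all (leq^~ n) s by apply/allP => c /(allP sA) /andP[].
  by rewrite subn1; apply: dist_le_perm An_pos sA sn st.
exists (iota 1 n), (rev (iota 1 n)); split; last exact: dist_eq_iota_rev.
- by apply/allP => c; rewrite mem_iota /alphAn; lia.
- by rewrite all_rev; apply/allP => c; rewrite mem_iota /alphAn; lia.
Qed.
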